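(* Let $\alpha\in(0,1)\cup(1,\infty)$ and let $p_{X,Y}=p_Xp_{Y\mid X}$ be a joint distribution on finite alphabets $\mathcal X\times\mathcal Y$. Then $$I_\alpha^{\mathrm S}(X;Y)=\max_{r_{X\mid Y}}F_\alpha^{\mathrm{S1}}(p_X,r_{X\mid Y})=\max_{r_{X\mid Y}}F_\alpha^{\mathrm{S2}}(p_X,r_{X\mid Y}),$$ where $$F_\alpha^{\mathrm{S1}}(p_X,r_{X\mid Y}):=\frac{\alpha}{\alpha-1}\log\sum_{x,y}p_X(x)^{1/\alpha}p_{Y\mid X}(y\mid x)\,r_{X\mid Y}(x\mid y)^{1-\frac1\alpha},$$ $$F_\alpha^{\mathrm{S2}}(p_X,r_{X\mid Y}):=F_\alpha^{\mathrm{S1}}(p_X,r_{X_\alpha\mid Y})=\frac{\alpha}{\alpha-1}\log\sum_{x,y}p_X(x)^{1/\alpha}p_{Y\mid X}(y\mid x)\,r_{X_\alpha\mid Y}(x\mid y)^{1-\frac1\alpha}.$$ Moreover, for $\alpha\in(1,\infty)$, $$I_\alpha^{\mathrm S}(X;Y)=\max_{\tilde q_{X,Y}}\max_{r_{X\mid Y}}\tilde F_\alpha^{\mathrm{S3}}(p_X,\tilde q_{X,Y},r_{X\mid Y}),$$ where, writing $\tilde q_X$ for the $X$-marginal of $\tilde q_{X,Y}$, $$\tilde F_\alpha^{\mathrm{S3}}(p_X,\tilde q_{X,Y},r_{X\mid Y}):=\frac{\alpha}{1-\alpha}D(\tilde q_{X,Y}\,\|\,\tilde q_Xp_{Y\mid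 X})+\mathbb E^{\tilde q_{X,Y}}\!\left[\log\frac{r_{X\mid Y}(X\mid Y)}{\tilde q_X(X)}\right]+\frac{1}{1-\alpha}D(\tilde q_X\,\|\,p_X).$$
   Context: All alphabets are finite and $\log$ is the natural logarithm. $D(p\|q)=\sum_z p(z)\log\frac{p(z)}{q(z)}$ is the Kullback–Leibler divergence. For $\alpha\in(0,1)\cup(1,\infty)$, the Rényi divergence is $D_\alpha(p\|q):=\frac{1}{\alpha-1}\log\sum_z p(z)^\alpha q(z)^{1-\alpha}$, and the Sibson mutual information of order $\alpha$ is $I_\alpha^{\mathrm S}(X;Y):=\min_{q_Y}D_\alpha(p_Xp_{Y\mid X}\|p_Xq_Y)$, the minimum over all distributions $q_Y$ on $\mathcal Y$. A reverse channel $r_{X\mid Y}=\{r_{X\mid Y}(\cdot\mid y)\}_{y\in\mathcal Y}$ is a family of distributions on $\mathcal X$ indexed by $y$; maxima over $r_{X\mid Y}$ range over all reverse channels, and maxima over $\tilde q_{X,Y}$ range over all joint distributions on $\mathcal X\times\mathcal Y$. $r_{X_\alpha\mid Y}$ denotes the $\alpha$-tilted reverse channel, $r_{X_\alpha\mid Y}(x\mid y):=r_{X\mid Y}(x\mid y)^\alpha/\sum_{x'}r_{X\mid Y}(x'\mid y)^\alpha$. $\mathbb E^{q}[\cdot]$ denotes expectation with respect to $q$. *)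

From HB Require Import structures.
From mathcomp Require Import all_boot all_order all_algebra.
From mathcomp Require Import all_classical all_reals all_analysis.
Set Implicit Arguments. Unset Strict Implicit. Unset Printing Implicit Defensive.
Import Order.TTheory GRing.Theory Num.Theory.
Local Open Scope ring_scope.
Local Open Scope classical_set_scope.

Section Defs.
Variable R : realType.

Definition xpow (a b : R) : \bar R :=
  if a == 0 then (if b < 0 then +oo%E else if b == 0 then 1%E else 0%E)
  else (a `^ b)%:E.

Definition xlog (v : \bar R) : \bar R :=
  match v with
  | r%:E => if 0 < r then (ln r)%:E else -oo%E
  | +oo%E => +oo%E
  | -oo%E => -oo%E
  end.

Definition is_dist (T : finType) (f : {ffun T -> R}) : Prop :=
  (forall t, 0 <= f t) /\ \sum_t f t = 1.

Definition is_channel (A B : finType) (W : {ffun A -> {ffun B -> R}}) : Prop :=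
  forall a, is_dist (W a).

(* Renyi divergence of order alpha (with the usual conventions 0 * oo = 0) *)
Definition renyi_div (T : finType) (alpha : R) (p q : {ffun T -> R}) : \bar R :=
  ((alpha - 1)^-1)%:E *
  xlog (\sum_(z : T) (xpow (p z) alpha * xpow (q z) (1 - alpha)))%E.

Definition kl_div (T : finType) (p q : {ffun T -> R}) : \bar R :=
  (\sum_(z : T) (if p z == 0%R then 0%E
                 else if q z == 0%R then +oo%E
                 else (p z * ln (p z / q z))%R%:E))%E.

Variables X Y : finType.

Definition joint (pX : {ffun X -> R}) (pYX : {ffun X -> {ffun Y -> R}})
  : {ffun X * Y -> R} := [ffun z => pX z.1 * pYX z.1 z.2].

Definition prod_dist (pX : {ffun X -> R}) (qY : {ffun Y -> R})
  : {ffun X * Y -> R} := [ffun z => pX z.1 * qY z.2].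

Definition margX (q : {ffun X * Y -> R}) : {ffun X -> R} :=
  [ffun x => \sum_(y : Y) q (x, y)].

(* Sibson mutual information: min over q_Y (rendered as infimum) *)
Definition sibson_MI (alpha : R) (pX : {ffun X -> R})
  (pYX : {ffun X -> {ffun Y -> R}}) : \bar R :=
  ereal_inf [set renyi_div alpha (joint pX pYX) (prod_dist pX qY)
            | qY in [set qY : {ffun Y -> R} | is_dist qY]].

(* reverse channel r : r y x = r_{X|Y}(x|y) *)
Definition F_S1 (alpha : R) (pX : {ffun X -> R})
  (pYX : {ffun X -> {ffun Y -> R}}) (r : {ffun Y -> {ffun X -> R}}) : \bar R :=
  (alpha / (alpha - 1))%:E *
  xlog (\sum_(z : X * Y)
          (xpow (pX z.1) (alpha^-1) * (pYX z.1 z.2)%:E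
           * xpow (r z.2 z.1) (1 - alpha^-1)))%E.

Definition tilt (alpha : R) (r : {ffun Y -> {ffun X -> R}})
  : {ffun Y -> {ffun X -> R}} :=
  [ffun y => [ffun x => r y x `^ alpha / \sum_(x' : X) r y x' `^ alpha]].

Definition F_S2 (alpha : R) (pX : {ffun X -> R})
  (pYX : {ffun X -> {ffun Y -> R}}) (r : {ffun Y -> {ffun X -> R}}) : \bar R :=
  F_S1 alpha pX pYX (tilt alpha r).

Definition expect_log_ratio (q : {ffun X * Y -> R})
  (r : {ffun Y -> {ffun X -> R}}) : \bar R :=
  (\sum_(z : X * Y) (if q z == 0%R then 0%E
                     else if r z.2 z.1 == 0%R then -oo%E
                     else (q z * ln (r z.2 z.1 / margX q z.1))%R%:E))%E.

Definition F_S3 (alpha : R) (pX : {ffun X -> R})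
  (pYX : {ffun X -> {ffun Y -> R}}) (q : {ffun X * Y -> R})
  (r : {ffun Y -> {ffun X -> R}}) : \bar R :=
  ((alpha / (1 - alpha))%:E * kl_div q (joint (margX q) pYX)
   + expect_log_ratio q r
   + ((1 - alpha)^-1)%:E * kl_div (margX q) pX)%E.

End Defs.

Definition is_max_of (R : realType) (U : Type) (P : U -> Prop)
  (f : U -> \bar R) (v : \bar R) : Prop :=
  (exists u, P u /\ f u = v) /\ (forall u, P u -> (f u <= v)%E).

From HB Require Import structures.
From mathcomp Require Import all_boot all_order all_algebra.
From mathcomp Require Import all_classical all_reals all_analysis.
From mathcomp Require Import ring lra.
Import Order.TTheory GRing.Theory Num.Theory.
Set Implicit Arguments. Unset Strict Implicit. Unset Printing Implicit Defensive.
Local Open Scope ring_scope.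

(* Write w(x,y) = p_X(x) p_{Y|X}(y|x)^alpha, m(y) = \sum_x w(x,y) and
   S = \sum_y m(y)^(1/alpha).  All four variational problems have the value
   alpha/(alpha-1) log S.
   For the Renyi divergence this is Sibson's computation: Hoelder's inequality
   bounds \sum_y q(y)^(1-alpha) m(y) by S^alpha from the appropriate side, and
   q*(y) ~ m(y)^(1/alpha) attains the bound.
   For F^S1, Hoelder's inequality for each fixed y compares
   \sum_x p_X^(1/alpha) p_{Y|X} r^(1-1/alpha) with m(y)^(1/alpha), with equality
   at r*(x|y) = w(x,y)/m(y); the sign of alpha/(alpha-1) makes the two regimes
   alpha < 1 and alpha > 1 give the same upper bound.
   The alpha-tilt is inverted by the (1/alpha)-tilt, so F^S2 has the same range
   as F^S1.
   For alpha > 1, F^S3(q, r) is either -oo or alpha/(alpha-1) times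
   \sum q log(v/q) with v = p_X^(1/alpha) p_{Y|X} r^(1-1/alpha); Gibbs'
   inequality bounds this by log \sum v, i.e. by the F^S1 bound, and the
   maximiser is q ~ v for r = r*. *)

Section RealInequalities.
Variable R : realType.

Lemma powR_AMGM (g u v : R) : 0 < g < 1 -> 0 <= u -> 0 <= v ->
  u `^ g * v `^ (1 - g) <= g * u + (1 - g) * v.
Proof.
move=> /andP[g0 g1] u0 v0.
have g1' : 0 < 1 - g by rewrite subr_gt0.
have := @conjugate_powR R (u `^ g) (v `^ (1 - g)) g^-1 (1 - g)^-1
  (powR_ge0 _ _) (powR_ge0 _ _).
rewrite !invr_gt0 => /(_ g0 g1'); rewrite !invrK addrC subrK => /(_ erefl).
by rewrite -!powRrM !mulfV ?gt_eqF // !powRr1 // [u * g]mulrC [v * _]mulrC.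
Qed.

Lemma sum_powR_holder (T : finType) (g : R) (f h : T -> R) :
  0 < g < 1 -> (forall t, 0 <= f t) -> (forall t, 0 <= h t) ->
  \sum_t f t `^ g * h t `^ (1 - g) <= (\sum_t f t) `^ g * (\sum_t h t) `^ (1 - g).
Proof.
move=> /andP[g0 g1] f0 h0.
have g1' : 1 - g != 0 by rewrite subr_eq0 eq_sym lt_eqF.
have [F0|Fn0] := eqVneq (\sum_t f t) 0.
  rewrite big1 ?F0 ?powR0 ?gt_eqF ?mul0r // => t _.
  by rewrite (psumr_eq0P (fun t _ => f0 t) F0) // powR0 ?gt_eqF ?mul0r.
have [H0|Hn0] := eqVneq (\sum_t h t) 0.
  rewrite big1 ?H0 ?powR0 ?mulr0 // => t _.
  by rewrite (psumr_eq0P (fun t _ => h0 t) H0) // powR0 ?mulr0.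
set F := \sum_t f t in Fn0 *; set H := \sum_t h t in Hn0 *.
have Fp : 0 < F by rewrite lt_def Fn0 sumr_ge0.
have Hp : 0 < H by rewrite lt_def Hn0 sumr_ge0.
(* normalise both families to total mass one and apply AM-GM termwise *)
have termwise t : f t `^ g * h t `^ (1 - g) <=
    F `^ g * H `^ (1 - g) * (g * (f t / F) + (1 - g) * (h t / H)).
  have -> : f t `^ g * h t `^ (1 - g) =
      F `^ g * H `^ (1 - g) * ((f t / F) `^ g * (h t / H) `^ (1 - g)).
    rewrite -{1}(divfK Fn0 (f t)) -{1}(divfK Hn0 (h t)).
    by rewrite !powRM ?divr_ge0 ?invr_ge0 ?f0 ?h0 ?ltW //; ring.
  apply: ler_wpM2l; first by rewrite mulr_ge0 ?powR_ge0.
  by apply: powR_AMGM; rewrite ?g0 ?g1 ?divr_ge0 ?f0 ?h0 ?ltW.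
apply: le_trans (ler_sum _ (fun t _ => termwise t)) _.
rewrite -mulr_sumr big_split /= -!mulr_sumr -!mulr_suml !mulfV //.
by rewrite !mulr1 addrC subrK mulr1.
Qed.

Lemma ln_le_subr1 (t : R) : 0 < t -> ln t <= t - 1.
Proof. by move=> t0; have := @le_ln1Dx R (t - 1); rewrite subrKC; apply; lra. Qed.

Lemma sum_ln_ratio_le_ln_sum (T : finType) (q v : T -> R) :
  (forall t, 0 <= q t) -> \sum_t q t = 1 -> (forall t, 0 <= v t) ->
  (forall t, q t != 0 -> 0 < v t) ->
  \sum_t (if q t == 0 then 0 else q t * ln (v t / q t)) <= ln (\sum_t v t).
Proof.
move=> q0 q1 v0 qv.
have [t /andP[_ qt]] : exists t, true && (0 < q t).
  by apply: psumr_neq0P => [t _|]; [exact: q0 | rewrite q1; exact/eqP/oner_neq0].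
set V := \sum_t v t.
have Vp : 0 < V by rewrite /V (bigD1 t) //= ltr_pwDl ?sumr_ge0 // qv // gt_eqF.
have termwise s : (if q s == 0 then 0 else q s * ln (v s / q s)) <=
    v s / V - q s + q s * ln V.
  case: eqP => [->|/eqP qn]; first by rewrite subr0 mul0r addr0 divr_ge0 // ltW.
  have qp : 0 < q s by rewrite lt_def qn q0.
  have vp := qv s qn.
  have -> : v s / q s = v s / (q s * V) * V by rewrite invfM mulrA divfK ?gt_eqF.
  rewrite lnM ?posrE ?divr_gt0 ?mulr_gt0 // mulrDr lerD2r.
  rewrite (_ : v s / V - q s = q s * (v s / (q s * V) - 1)); last first.
    by field; rewrite !gt_eqF.
  by rewrite ler_pM2l // ln_le_subr1 // divr_gt0 ?mulr_gt0.
apply: le_trans (ler_sum _ (fun s _ => termwise s)) _.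
rewrite !big_split /= -mulr_suml mulfV ?gt_eqF // -mulr_suml q1 mul1r.
by rewrite sumrN q1 subrr add0r.
Qed.

Lemma powRVK (a p : R) : 0 <= a -> p != 0 -> (a `^ p^-1) `^ p = a.
Proof. by move=> a0 p0; rewrite -powRrM mulVf // powRr1. Qed.

Lemma powRKV (a p : R) : 0 <= a -> p != 0 -> (a `^ p) `^ p^-1 = a.
Proof. by move=> a0 p0; rewrite -powRrM mulfV // powRr1. Qed.

Lemma powR_div (a b p : R) : 0 <= a -> 0 < b -> (a / b) `^ p = a `^ p / b `^ p.
Proof.
move=> a0 b0; have b0' : 0 <= b by exact: ltW.
rewrite -[in RHS](divfK (lt0r_neq0 b0) a) [in RHS]powRM ?divr_ge0 //.
by rewrite mulfK // gt_eqF // powR_gt0.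
Qed.

Lemma powR_div_mul (a b p : R) : 0 <= a -> 0 < b -> 0 < p ->
  (a / b) `^ (1 - p) * a `^ p = a * b `^ (p - 1).
Proof.
move=> a0 b0 p0; have [->|an0] := eqVneq a 0.
  by rewrite mul0r [0 `^ p]powR0 ?gt_eqF // mulr0 mul0r.
rewrite powR_div // mulrAC -powRD; last by rewrite an0 implybT.
by rewrite subrK powRr1 // -powRN opprB.
Qed.

End RealInequalities.

Section ExtendedReals.
Variable R : realType.
Local Open Scope ereal_scope.

Lemma lee_wnmul2l (z : R) (x y : \bar R) : (z <= 0)%R -> x <= y -> z%:E * y <= z%:E * x.
Proof.
move=> z0 xy; have := @lee_wpmul2l R (- z)%:E _ _ _ xy.
by rewrite lee_fin oppr_ge0 => /(_ z0); rewrite EFinN !mulNe leeN2.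
Qed.

Lemma xlog_EFin (r : R) : (0 < r)%R -> xlog r%:E = (ln r)%:E.
Proof. by rewrite /xlog => ->. Qed.

Lemma le_xlog (u v : \bar R) : 0 <= u -> u <= v -> xlog u <= xlog v.
Proof.
case: u v => [u| |] [v| |] //=; rewrite ?leey // !lee_fin => u0 uv.
have [up|_] := ltP 0%R u; last exact: leNye.
by rewrite (lt_le_trans up uv) lee_fin ler_ln // posrE (lt_le_trans up uv).
Qed.

Lemma xpow_gt0 (a b : R) : (0 < a)%R -> xpow a b = (a `^ b)%:E.
Proof. by move=> a0; rewrite /xpow gt_eqF. Qed.

Lemma xpow0_gt0 (b : R) : (0 < b)%R -> xpow 0 b = 0.
Proof. by move=> b0; rewrite /xpow eqxx ltNge (ltW b0) /= gt_eqF. Qed.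

Lemma xpow0_lt0 (b : R) : (b < 0)%R -> xpow 0 b = +oo.
Proof. by move=> b0; rewrite /xpow eqxx b0. Qed.

Lemma xpow_ge0 (a b : R) : 0 <= xpow a b.
Proof.
rewrite /xpow; case: ifP => _; last by rewrite lee_fin powR_ge0.
by case: ifP => _ //; case: ifP.
Qed.

Lemma esum_eqy_at (T : finType) (f : T -> \bar R) t :
  (forall s, f s != -oo) -> f t = +oo -> \sum_s f s = +oo.
Proof. by move=> fN ft; apply/esum_eqyP => [s _|]; [exact: fN | exists t]. Qed.

Lemma ge0_neqNy (x : \bar R) : 0 <= x -> x != -oo.
Proof. by move=> x0; rewrite gt_eqF // (lt_le_trans ltNy0). Qed.

End ExtendedReals.

Section Distributions.
Variable R : realType.

Lemma dist_gt0 (T : finType) (f : {ffun T -> R}) : is_dist f -> exists t, 0 < f t.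
Proof.
case=> f0 f1; have /psumr_neq0P[t|t /andP[_ ft]] : \sum_t f t <> 0.
- by rewrite f1; exact/eqP/oner_neq0.
- by move=> _; exact: f0.
by exists t.
Qed.

Lemma sum_powR_dist_gt0 (T : finType) (f : {ffun T -> R}) (g : R) :
  is_dist f -> 0 < \sum_t f t `^ g.
Proof.
move=> fd; have [t ft] := dist_gt0 fd.
by rewrite (bigD1 t) //= ltr_pwDl ?powR_gt0 ?sumr_ge0 // => s _; exact: powR_ge0.
Qed.

Lemma pair_sum (X Y : finType) (F : X -> Y -> R) :
  \sum_(z : X * Y) F z.1 z.2 = \sum_y \sum_x F x y.
Proof. by rewrite -pair_bigA /= exchange_big. Qed.

Lemma kl_div_EFin (T : finType) (p q : {ffun T -> R}) :
  (forall t, p t != 0 -> q t != 0) ->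
  kl_div p q = (\sum_t (if p t == 0 then 0 else p t * ln (p t / q t)))%:E.
Proof.
move=> pq; rewrite /kl_div -sumEFin; apply: eq_bigr => t _.
by case: eqP => [//|/eqP /pq /negPf ->].
Qed.

Lemma kl_div_eqy (T : finType) (p q : {ffun T -> R}) t :
  p t != 0 -> q t = 0 -> kl_div p q = +oo%E.
Proof.
move=> pt qt; apply: (esum_eqy_at (t := t)) => [s|]; last by rewrite (negPf pt) qt eqxx.
by case: ifP => _ //; case: ifP.
Qed.

Lemma tiltE (X Y : finType) (g : R) (r : {ffun Y -> {ffun X -> R}}) y x :
  tilt g r y x = r y x `^ g / \sum_x' r y x' `^ g.
Proof. by rewrite !ffunE. Qed.

Lemma tilt_channel (X Y : finType) (g : R) (r : {ffun Y -> {ffun X -> R}}) :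
  is_channel r -> is_channel (tilt g r).
Proof.
move=> rc y; have N0 := sum_powR_dist_gt0 g (rc y); split.
  by move=> x; rewrite tiltE divr_ge0 ?powR_ge0 ?ltW.
under eq_bigr do rewrite tiltE.
by rewrite -mulr_suml mulfV ?gt_eqF.
Qed.

Lemma tiltK (X Y : finType) (g : R) (r : {ffun Y -> {ffun X -> R}}) :
  g != 0 -> is_channel r -> tilt g (tilt g^-1 r) = r.
Proof.
move=> g0 rc; apply/ffunP => y; apply/ffunP => x.
have N0 := sum_powR_dist_gt0 g^-1 (rc y); have [r0 r1] := rc y.
rewrite tiltE; under eq_bigr do rewrite tiltE powR_div ?powR_ge0 // powRVK //.
rewrite tiltE powR_div ?powR_ge0 // powRVK // -mulr_suml r1 mul1r invrK.
by rewrite divfK // gt_eqF // powR_gt0.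
Qed.

Section Marginals.
Variables (X Y : finType) (q : {ffun X * Y -> R}).
Hypothesis q_ge0 : forall z, 0 <= q z.

Lemma margX_ge x y : q (x, y) <= margX q x.
Proof. by rewrite ffunE (bigD1 y) //= lerDl sumr_ge0. Qed.

Lemma margX_eq0 x : margX q x = 0 -> forall y, q (x, y) = 0.
Proof. by rewrite ffunE => /psumr_eq0P q0 y; apply: q0. Qed.

Lemma margX_gt0 z : q z != 0 -> 0 < margX q z.1.
Proof.
move=> qz; apply: lt_le_trans (margX_ge z.1 z.2).
by rewrite -surjective_pairing lt_def qz q_ge0.
Qed.

Lemma sum_margX_weighted (f : X -> R) :
  \sum_x (if margX q x == 0 then 0 else margX q x * f x) =
  \sum_z (if q z == 0 then 0 else q z * f z.1).
Proof.
set F := fun x y => if q (x, y) == 0 then 0 else q (x, y) * f x.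
rewrite [RHS](eq_bigr (fun z => F z.1 z.2)); last by case.
rewrite -pair_bigA /= /F.
apply: eq_bigr => x _; case: eqP => [/margX_eq0 qx0|_].
  by rewrite big1 // => y _; rewrite qx0 eqxx.
by rewrite ffunE mulr_suml; apply: eq_bigr => y _; case: eqP => [->|]; rewrite ?mul0r.
Qed.

Lemma expect_log_ratio_EFin (r : {ffun Y -> {ffun X -> R}}) :
  (forall z, q z != 0 -> r z.2 z.1 != 0) ->
  expect_log_ratio q r =
  (\sum_z (if q z == 0 then 0 else q z * ln (r z.2 z.1 / margX q z.1)))%:E.
Proof.
move=> qr; rewrite /expect_log_ratio -sumEFin; apply: eq_bigr => z _.
by case: eqP => [//|/eqP /qr /negPf ->].
Qed.

End Marginals.

End Distributions.

Section Summands.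
Variable R : realType.
Implicit Types a p w q r : R.

Lemma xpow_renyi_termE a p w q : 0 < a -> 0 <= p -> 0 <= w -> 0 <= q ->
  [\/ 0 < q, p * w = 0 | a < 1] ->
  (xpow (p * w) a * xpow (p * q) (1 - a) = (p * w `^ a * q `^ (1 - a))%:E)%E.
Proof.
move=> a0 p0 w0 q0 cases; have [pw0|pwn] := eqVneq (p * w) 0.
  rewrite pw0 xpow0_gt0 // mul0e; move: pw0 => /eqP; rewrite mulf_eq0.
  by case/orP => /eqP->; rewrite ?mul0r ?powR0 ?gt_eqF ?mulr0 ?mul0r.
have pp : 0 < p by rewrite lt_def p0 andbT; apply: contraNneq pwn => ->; rewrite mul0r.
have wp : 0 < w by rewrite lt_def w0 andbT; apply: contraNneq pwn => ->; rewrite mulr0.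
rewrite xpow_gt0 ?mulr_gt0 //; have [qp|] := ltP 0 q.
  rewrite xpow_gt0 ?mulr_gt0 // -EFinM !powRM ?ltW // mulrACA -powRD.
    by rewrite subrKC powRr1 ?ltW // mulrA.
  by rewrite (gt_eqF pp) implybT.
rewrite le_eqVlt ltNge q0 orbF => /eqP qz.
have a1 : a < 1 by case: cases; rewrite ?qz ?ltxx // => /eqP; rewrite (negPf pwn).
rewrite qz mulr0 xpow0_gt0 ?subr_gt0 // mule0 powR0 ?mulr0 //.
by rewrite subr_eq0 eq_sym lt_eqF.
Qed.

Lemma xpow_renyi_term_eqy a p w : 1 < a -> 0 < p * w ->
  (xpow (p * w) a * xpow (p * 0) (1 - a) = +oo)%E.
Proof.
move=> a1 pw; rewrite xpow_gt0 // mulr0 xpow0_lt0 ?subr_lt0 //.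
by rewrite gt0_muley // lte_fin powR_gt0.
Qed.

Lemma xpow_s1_termE a p w r : 0 < a -> 0 <= p -> 0 <= w -> 0 <= r ->
  [\/ 0 < r, p * w = 0 | 1 < a] ->
  (xpow p a^-1 * w%:E * xpow r (1 - a^-1) = (p `^ a^-1 * w * r `^ (1 - a^-1))%:E)%E.
Proof.
move=> a0 p0 w0 r0 cases; have ai0 : 0 < a^-1 by rewrite invr_gt0.
have [->|pn] := eqVneq p 0; first by rewrite xpow0_gt0 // !mul0e powR0 ?gt_eqF // !mul0r.
rewrite xpow_gt0; last by rewrite lt_def pn.
have [->|wn] := eqVneq w 0; first by rewrite mule0 mul0e mulr0 mul0r.
have [rp|] := ltP 0 r; first by rewrite xpow_gt0 // -!EFinM.
rewrite le_eqVlt ltNge r0 orbF => /eqP rz.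
have a1 : 1 < a.
  by case: cases; rewrite ?rz ?ltxx // => /eqP; rewrite mulf_eq0 (negPf pn) (negPf wn).
by rewrite rz xpow0_gt0 ?mule0 ?powR0 ?mulr0 // ?gt_eqF // subr_gt0 invf_lt1.
Qed.

Lemma xpow_s1_term_eqy a p w : 0 < a -> a < 1 -> 0 < p -> 0 < w ->
  (xpow p a^-1 * w%:E * xpow 0 (1 - a^-1) = +oo)%E.
Proof.
move=> a0 a1 pp wp; rewrite xpow_gt0 // xpow0_lt0; last by rewrite subr_lt0 invf_gt1.
by rewrite -EFinM gt0_muley // lte_fin mulr_gt0 // powR_gt0.
Qed.

End Summands.

Section Sibson.
Variables (R : realType) (X Y : finType) (al : R).
Variables (pX : {ffun X -> R}) (W : {ffun X -> {ffun Y -> R}}).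
Hypotheses (al_gt0 : 0 < al) (pX_dist : is_dist pX) (W_chan : is_channel W).

Let al_neq0 : al != 0. Proof. exact: lt0r_neq0. Qed.
Let pX_ge0 x : 0 <= pX x. Proof. by case: pX_dist. Qed.
Let W_ge0 x y : 0 <= W x y. Proof. by case: (W_chan x). Qed.
Let pW_gt0 x y : pX x * W x y != 0 -> 0 < pX x /\ 0 < W x y.
Proof.
by rewrite mulf_eq0 negb_or => /andP[pn wn]; rewrite !lt_def pn wn pX_ge0 W_ge0.
Qed.

Definition sib_weight x y := pX x * W x y `^ al.
Definition sib_mass y := \sum_x sib_weight x y.
Definition sib_norm := \sum_y sib_mass y `^ al^-1.
Definition sibson_value := al / (al - 1) * ln sib_norm.

Lemma sib_weight_ge0 x y : 0 <= sib_weight x y.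
Proof. by rewrite mulr_ge0 ?powR_ge0. Qed.

Lemma sib_weight_eq0 x y : (sib_weight x y == 0) = (pX x * W x y == 0).
Proof. by rewrite !mulf_eq0 powR_eq0 al_neq0 andbT. Qed.

Lemma sib_mass_ge0 y : 0 <= sib_mass y.
Proof. by apply: sumr_ge0 => x _; exact: sib_weight_ge0. Qed.

Lemma sib_mass_eq0 y : sib_mass y = 0 -> forall x, pX x * W x y = 0.
Proof.
move=> /psumr_eq0P B0 x; apply/eqP; rewrite -sib_weight_eq0.
by rewrite B0 // => x' _; exact: sib_weight_ge0.
Qed.

Lemma sib_mass_gt0 x y : pX x * W x y != 0 -> 0 < sib_mass y.
Proof.
move=> pw; rewrite lt_def sib_mass_ge0 andbT.
by apply: contra pw => /eqP /sib_mass_eq0 ->.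
Qed.

Lemma sib_norm_gt0 : 0 < sib_norm.
Proof.
have [x px] := dist_gt0 pX_dist; have [y wy] := dist_gt0 (W_chan x).
have pw : pX x * W x y != 0 by rewrite mulf_neq0 // gt_eqF.
rewrite /sib_norm (bigD1 y) //= ltr_pwDl ?powR_gt0 ?(sib_mass_gt0 pw) //.
by apply: sumr_ge0 => y' _; exact: powR_ge0.
Qed.

Lemma sibson_valueE : sibson_value = (al - 1)^-1 * ln (sib_norm `^ al).
Proof. by rewrite ln_powR /sibson_value mulrCA mulrA. Qed.

Lemma renyi_sum_EFin (q : {ffun Y -> R}) : is_dist q ->
  al < 1 \/ (forall x y, q y = 0 -> pX x * W x y = 0) ->
  (\sum_z xpow (joint pX W z) al * xpow (prod_dist pX q z) (1 - al))%E =
  (\sum_y q y `^ (1 - al) * sib_mass y)%:E.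
Proof.
move=> [q0 _] dom.
rewrite (eq_bigr (fun z => (pX z.1 * W z.1 z.2 `^ al * q z.2 `^ (1 - al))%:E)).
  rewrite sumEFin (pair_sum (fun x y => pX x * W x y `^ al * q y `^ (1 - al))).
  congr (_%:E); apply: eq_bigr => y _; rewrite /sib_mass mulr_sumr.
  by apply: eq_bigr => x _; rewrite mulrC.
move=> [x y] _; rewrite !ffunE /=; apply: xpow_renyi_termE => //.
have [qp|q0'] := ltP 0 (q y); first exact: Or31.
case: dom => [al1|dom]; first exact: Or33.
by apply: Or32; apply: dom; apply/eqP; rewrite eq_le q0' q0.
Qed.

Lemma sum_output_mass_le (q : {ffun Y -> R}) : al < 1 -> is_dist q ->
  \sum_y q y `^ (1 - al) * sib_mass y <= sib_norm `^ al.
Proof.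
move=> al1 [q0 q1].
have := @sum_powR_holder R Y al (fun y => sib_mass y `^ al^-1) q.
rewrite al_gt0 al1 q1 powR1 mulr1 => /(_ erefl (fun y => powR_ge0 _ _) q0).
by under eq_bigr do rewrite powRVK ?sib_mass_ge0 // mulrC.
Qed.

Lemma sum_output_mass_ge (q : {ffun Y -> R}) : 1 < al -> is_dist q ->
  (forall y, q y = 0 -> sib_mass y = 0) ->
  sib_norm `^ al <= \sum_y q y `^ (1 - al) * sib_mass y.
Proof.
move=> al1 [q0 q1] dom.
set f := fun y => q y `^ (1 - al) * sib_mass y.
have f0 y : 0 <= f y by rewrite mulr_ge0 ?powR_ge0 ?sib_mass_ge0.
(* Hoelder with exponent al^-1 for f and q has sib_norm as its left-hand side. *)
have fq y : f y `^ al^-1 * q y `^ (1 - al^-1) = sib_mass y `^ al^-1.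
  have [qp|] := ltP 0 (q y).
    rewrite powRM ?powR_ge0 ?sib_mass_ge0 // -powRrM mulrAC -powRD; last first.
      by rewrite (gt_eqF qp) implybT.
    by rewrite (_ : _ + _ = 0) ?powRr0 ?mul1r //; field.
  rewrite le_eqVlt ltNge q0 orbF => /eqP qz.
  rewrite /f qz dom // mulr0 !powR0 ?mulr0 // ?invr_eq0 //.
  by rewrite gt_eqF // subr_gt0 invf_lt1.
have := @sum_powR_holder R Y al^-1 f q.
rewrite invr_gt0 al_gt0 invf_lt1 // al1 q1 powR1 mulr1 => /(_ erefl f0 q0).
rewrite (eq_bigr _ (fun y _ => fq y)) -/sib_norm => hol.
rewrite -(powRVK (sumr_ge0 _ (fun y _ => f0 y)) al_neq0).
by rewrite ge0_ler_powR ?nnegrE ?powR_ge0 ?(ltW al_gt0) ?(ltW sib_norm_gt0).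
Qed.

Lemma renyi_div_ge (q : {ffun Y -> R}) : al != 1 -> is_dist q ->
  (sibson_value%:E <= renyi_div al (joint pX W) (prod_dist pX q))%E.
Proof.
move=> al1 qd; have [q0 _] := qd; have S0 := sib_norm_gt0.
rewrite /renyi_div sibson_valueE EFinM -xlog_EFin ?powR_gt0 //.
have [al_lt1|al_gt1|/eqP] := ltgtP al 1; last by rewrite (negPf al1).
  rewrite renyi_sum_EFin //; last by left.
  apply: lee_wnmul2l; first by rewrite invr_le0 subr_le0 ltW.
  apply: le_xlog; last by rewrite lee_fin sum_output_mass_le.
  by rewrite lee_fin sumr_ge0 // => y _; rewrite mulr_ge0 ?powR_ge0 ?sib_mass_ge0.
have [[x [y [qy pw]]]|undom] := pselect (exists x y, q y = 0 /\ pX x * W x y != 0).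
  rewrite (@esum_eqy_at _ _ _ (x, y)).
  - by rewrite /= gt0_muley ?leey // lte_fin invr_gt0 subr_gt0.
  - by move=> z; rewrite ge0_neqNy // mule_ge0 ?xpow_ge0.
  rewrite !ffunE /= qy xpow_renyi_term_eqy //.
  by rewrite lt_def pw mulr_ge0.
have dom x y : q y = 0 -> pX x * W x y = 0.
  by move=> qy; apply/eqP/negPn/negP => pw; apply: undom; exists x, y.
rewrite renyi_sum_EFin //; last by right.
apply: lee_wpmul2l; first by rewrite lee_fin invr_ge0 subr_ge0 ltW.
apply: le_xlog; first by rewrite lee_fin powR_ge0.
rewrite lee_fin sum_output_mass_ge // => y qy; apply: big1 => x _.
by apply/eqP; rewrite sib_weight_eq0 dom.
Qed.

Definition opt_output : {ffun Y -> R} := [ffun y => sib_mass y `^ al^-1 / sib_norm].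

Lemma opt_output_dist : is_dist opt_output.
Proof.
have S0 := sib_norm_gt0; split=> [y|]; first by rewrite ffunE divr_ge0 ?powR_ge0 ?ltW.
by under eq_bigr do rewrite ffunE; rewrite -mulr_suml mulfV ?gt_eqF.
Qed.

Lemma renyi_div_opt_output : al != 1 ->
  renyi_div al (joint pX W) (prod_dist pX opt_output) = sibson_value%:E.
Proof.
move=> al1; have S0 := sib_norm_gt0.
have dom x y : opt_output y = 0 -> pX x * W x y = 0.
  rewrite ffunE => /eqP; rewrite mulf_eq0 invr_eq0 (gt_eqF S0) orbF.
  by rewrite powR_eq0 => /andP[/eqP /sib_mass_eq0 ->].
rewrite /renyi_div (renyi_sum_EFin opt_output_dist (or_intror dom)).
under eq_bigr do
  rewrite ffunE -{2}(powRVK (sib_mass_ge0 _) al_neq0) powR_div_mul ?powR_ge0 //.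
rewrite -mulr_suml mulr_powRB1 ?ltW // xlog_EFin ?powR_gt0 //.
by rewrite sibson_valueE EFinM.
Qed.

Lemma sibson_MI_closed_form : al != 1 -> sibson_MI al pX W = sibson_value%:E.
Proof.
move=> al1; apply/eqP; rewrite eq_le; apply/andP; split.
  apply: ereal_inf_lbound; exists opt_output; first exact: opt_output_dist.
  exact: renyi_div_opt_output.
by apply: le_ereal_inf_tmp => _ [q /= qd <-]; exact: renyi_div_ge.
Qed.

Definition s1_summand (r : {ffun Y -> {ffun X -> R}}) x y :=
  pX x `^ al^-1 * W x y * r y x `^ (1 - al^-1).

Lemma s1_summand_ge0 r x y : 0 <= s1_summand r x y.
Proof. by rewrite !mulr_ge0 ?powR_ge0. Qed.

Lemma s1_summandE r x y :
  s1_summand r x y = sib_weight x y `^ al^-1 * r y x `^ (1 - al^-1).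
Proof. by rewrite /s1_summand /sib_weight powRM ?powR_ge0 // powRKV. Qed.

Lemma s1_sum_EFin r : is_channel r ->
  1 < al \/ (forall x y, r y x = 0 -> pX x * W x y = 0) ->
  (\sum_z xpow (pX z.1) al^-1 * (W z.1 z.2)%:E * xpow (r z.2 z.1) (1 - al^-1))%E =
  (\sum_y \sum_x s1_summand r x y)%:E.
Proof.
move=> rc dom; have r0 x y : 0 <= r y x by case: (rc y).
rewrite (eq_bigr (fun z => (s1_summand r z.1 z.2)%:E)); first by rewrite sumEFin pair_sum.
move=> [x y] _; apply: xpow_s1_termE => //.
have [rp|r0'] := ltP 0 (r y x); first exact: Or31.
case: dom => [al1|dom]; first exact: Or33.
by apply: Or32; apply: dom; apply/eqP; rewrite eq_le r0' r0.
Qed.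

Lemma sum_s1_summand_le r y : 1 < al -> is_channel r ->
  \sum_x s1_summand r x y <= sib_mass y `^ al^-1.
Proof.
move=> al1 rc; have [r0 r1] := rc y.
under eq_bigr do rewrite s1_summandE.
have := @sum_powR_holder R X al^-1 (sib_weight^~ y) (r y).
rewrite invr_gt0 al_gt0 invf_lt1 // al1 r1 powR1 mulr1; apply=> // x.
exact: sib_weight_ge0.
Qed.

Lemma sum_s1_summand_ge r y : al < 1 -> is_channel r ->
  (forall x, r y x = 0 -> pX x * W x y = 0) ->
  sib_mass y `^ al^-1 <= \sum_x s1_summand r x y.
Proof.
move=> al1 rc dom; have [r0 r1] := rc y.
(* Hoelder with exponent al for the summands and r y has sib_mass y as its
   left-hand side. *)
have sr x : s1_summand r x y `^ al * r y x `^ (1 - al) = sib_weight x y.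
  rewrite s1_summandE; have [rp|] := ltP 0 (r y x).
    rewrite powRM ?powR_ge0 // powRVK ?sib_weight_ge0 // -powRrM -mulrA -powRD.
      by rewrite (_ : _ + _ = 0) ?powRr0 ?mulr1 //; field.
    by rewrite (gt_eqF rp) implybT.
  rewrite le_eqVlt ltNge r0 orbF => /eqP rz.
  have /eqP wz : sib_weight x y == 0 by rewrite sib_weight_eq0 dom.
  have h1 : 1 - al^-1 != 0 by rewrite lt_eqF // subr_lt0 invf_gt1.
  have h2 : 1 - al != 0 by rewrite gt_eqF // subr_gt0.
  by rewrite rz wz !powR0 ?mulr0 ?invr_eq0.
have := @sum_powR_holder R X al (fun x => s1_summand r x y) (r y).
rewrite al_gt0 al1 r1 powR1 mulr1 => /(_ erefl (fun x => s1_summand_ge0 r x y) r0).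
rewrite (eq_bigr _ (fun x _ => sr x)) -/(sib_mass y) => hol.
have S0 : 0 <= \sum_x s1_summand r x y by apply: sumr_ge0 => x _; exact: s1_summand_ge0.
rewrite -[leRHS](powRKV S0 al_neq0).
by rewrite ge0_ler_powR ?nnegrE ?powR_ge0 ?sib_mass_ge0 // invr_ge0 ltW.
Qed.

Lemma F_S1_le r : al != 1 -> is_channel r -> (F_S1 al pX W r <= sibson_value%:E)%E.
Proof.
move=> al1 rc; have S0 := sib_norm_gt0.
rewrite /F_S1 /sibson_value (EFinM (al / (al - 1))) -xlog_EFin //.
have [al_lt1|al_gt1|/eqP] := ltgtP al 1; last by rewrite (negPf al1).
  have [[x [y [ry pw]]]|undom] := pselect (exists x y, r y x = 0 /\ pX x * W x y != 0).
    have [pp wp] := pW_gt0 pw.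
    rewrite (@esum_eqy_at _ _ _ (x, y)) /= ?ry ?xpow_s1_term_eqy //.
      by rewrite lt0_muley ?leNye // lte_fin pmulr_rlt0 // invr_lt0 subr_lt0.
    by move=> z; rewrite ge0_neqNy // !mule_ge0 ?xpow_ge0 ?lee_fin.
  have dom x y : r y x = 0 -> pX x * W x y = 0.
    by move=> ry; apply/eqP/negPn/negP => pw; apply: undom; exists x, y.
  rewrite s1_sum_EFin //; last by right.
  apply: lee_wnmul2l; first by rewrite pmulr_rle0 // invr_le0 subr_le0 ltW.
  apply: le_xlog; first by rewrite lee_fin ltW.
  by rewrite lee_fin ler_sum // => y _; apply: sum_s1_summand_ge => // x; exact: dom.
rewrite s1_sum_EFin //; last by left.
apply: lee_wpmul2l; first by rewrite lee_fin divr_ge0 ?subr_ge0 ?ltW.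
apply: le_xlog.
  by rewrite lee_fin !sumr_ge0 // => y _; rewrite sumr_ge0 // => x _; exact: s1_summand_ge0.
by rewrite lee_fin ler_sum // => y _; exact: sum_s1_summand_le.
Qed.

(* On outputs of mass zero any distribution will do; pX is a convenient one. *)
Definition opt_reverse : {ffun Y -> {ffun X -> R}} :=
  [ffun y => [ffun x => if sib_mass y == 0 then pX x else sib_weight x y / sib_mass y]].

Lemma opt_reverse_channel : is_channel opt_reverse.
Proof.
move=> y; have [B0|Bn0] := eqVneq (sib_mass y) 0; split=> [x|].
- by rewrite !ffunE B0 eqxx.
- by under eq_bigr do rewrite !ffunE B0 eqxx; case: pX_dist.
- by rewrite !ffunE (negPf Bn0) divr_ge0 ?sib_weight_ge0 ?sib_mass_ge0.
- by under eq_bigr do rewrite !ffunE (negPf Bn0); rewrite -mulr_suml mulfV.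
Qed.

Lemma sum_s1_opt_reverse y : \sum_x s1_summand opt_reverse x y = sib_mass y `^ al^-1.
Proof.
have ai0 : 0 < al^-1 by rewrite invr_gt0.
have [B0|Bn0] := eqVneq (sib_mass y) 0.
  rewrite B0 powR0 ?gt_eqF //; apply: big1 => x _.
  have /eqP wz : sib_weight x y == 0 by rewrite sib_weight_eq0 sib_mass_eq0.
  by rewrite s1_summandE wz powR0 ?mul0r ?gt_eqF.
have Bp : 0 < sib_mass y by rewrite lt_def Bn0 sib_mass_ge0.
under eq_bigr do
  rewrite s1_summandE !ffunE (negPf Bn0) mulrC powR_div_mul ?sib_weight_ge0 //.
by rewrite -mulr_suml mulr_powRB1 ?sib_mass_ge0.
Qed.

Lemma F_S1_opt_reverse : F_S1 al pX W opt_reverse = sibson_value%:E.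
Proof.
have dom x y : opt_reverse y x = 0 -> pX x * W x y = 0.
  rewrite !ffunE; case: ifP => [/eqP B0 _|/negbT Bn0 /eqP]; first exact: sib_mass_eq0.
  by rewrite mulf_eq0 invr_eq0 (negPf Bn0) orbF sib_weight_eq0 => /eqP.
rewrite /F_S1 (s1_sum_EFin opt_reverse_channel (or_intror dom)).
under eq_bigr do rewrite sum_s1_opt_reverse.
by rewrite xlog_EFin ?sib_norm_gt0 // -EFinM.
Qed.

Lemma F_S3_eqNy (q : {ffun X * Y -> R}) (r : {ffun Y -> {ffun X -> R}}) z :
  1 < al -> is_dist q -> q z != 0 ->
  [\/ pX z.1 = 0, W z.1 z.2 = 0 | r z.2 z.1 = 0] -> F_S3 al pX W q r = -oo%E.
Proof.
move=> al1 [q0 _] qz bad.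
have c1 : al / (1 - al) < 0 by rewrite pmulr_rlt0 ?invr_lt0 ?subr_lt0.
have c2 : (1 - al)^-1 < 0 by rewrite invr_lt0 subr_lt0.
have mz : margX q z.1 != 0 by rewrite gt_eqF ?margX_gt0.
rewrite /F_S3; case: bad => [pz|wz|rz].
- by rewrite (kl_div_eqy mz pz) lt0_muley // addeNy.
- have jz : joint (margX q) W z = 0 by rewrite ffunE wz mulr0.
  by rewrite (kl_div_eqy qz jz) lt0_muley // !addNye.
- rewrite (_ : expect_log_ratio q r = -oo%E) ?addeNy ?addNye //.
  by apply/esum_eqNyP; exists z; rewrite mem_index_enum (negPf qz) rz eqxx.
Qed.

Lemma F_S3_EFin (q : {ffun X * Y -> R}) (r : {ffun Y -> {ffun X -> R}}) :
  al != 1 -> is_dist q ->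
  (forall z, q z != 0 -> [/\ 0 < pX z.1, 0 < W z.1 z.2 & 0 < r z.2 z.1]) ->
  F_S3 al pX W q r = (al / (al - 1) *
    \sum_z (if q z == 0 then 0 else q z * ln (s1_summand r z.1 z.2 / q z)))%:E.
Proof.
move=> al1 [q0 _] supp.
have mp := margX_gt0 q0.
have qW z : q z != 0 -> joint (margX q) W z != 0.
  by move=> qz; have [_ wp _] := supp z qz; rewrite ffunE mulf_neq0 ?gt_eqF ?mp.
have qr z : q z != 0 -> r z.2 z.1 != 0.
  by move=> qz; have [_ _ rp] := supp z qz; rewrite gt_eqF.
have mpX x : margX q x != 0 -> pX x != 0.
  rewrite ffunE => /eqP /psumr_neq0P [y _|y /andP[_ /lt0r_neq0 /supp[pp _ _]]].
    exact: q0.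
  by rewrite gt_eqF.
rewrite /F_S3 (kl_div_EFin qW) (kl_div_EFin mpX) (expect_log_ratio_EFin qr).
rewrite (sum_margX_weighted q0) -!EFinM -!EFinD; congr (_%:E).
rewrite !mulr_sumr -!big_split /=; apply: eq_bigr => z _.
case: eqP => [_|/eqP qz]; first by rewrite !mulr0 !addr0.
have [pp wp rp] := supp z qz; have qp : 0 < q z by rewrite lt_def qz q0.
have mzp := mp z qz.
rewrite ffunE /s1_summand !ln_div ?lnM ?ln_powR ?posrE ?mulr_gt0 ?powR_gt0 //.
by field; rewrite al_neq0 !subr_eq0 [1 == al]eq_sym al1.
Qed.

Lemma F_S3_le (q : {ffun X * Y -> R}) (r : {ffun Y -> {ffun X -> R}}) :
  1 < al -> is_dist q -> is_channel r -> (F_S3 al pX W q r <= sibson_value%:E)%E.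
Proof.
move=> al1 qd rc; have [q0 q1] := qd; have S0 := sib_norm_gt0.
have r0 x y : 0 <= r y x by case: (rc y).
have [[z [qz bad]]|good] :=
  pselect (exists z, q z != 0 /\ [\/ pX z.1 = 0, W z.1 z.2 = 0 | r z.2 z.1 = 0]).
  by rewrite (F_S3_eqNy al1 qd qz bad) leNye.
have supp z : q z != 0 -> [/\ 0 < pX z.1, 0 < W z.1 z.2 & 0 < r z.2 z.1].
  move=> qz; rewrite !lt_def pX_ge0 W_ge0 r0 !andbT.
  by split; apply/eqP => z0; apply: good; exists z; split=> //;
    [exact: Or31 | exact: Or32 | exact: Or33].
have sp z : q z != 0 -> 0 < s1_summand r z.1 z.2.
  by move=> /supp[pp wp rp]; rewrite /s1_summand !mulr_gt0 ?powR_gt0.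
rewrite F_S3_EFin ?gt_eqF // lee_fin; apply: ler_wpM2l.
  by rewrite divr_ge0 ?subr_ge0 ?ltW.
apply: le_trans (sum_ln_ratio_le_ln_sum (v := fun z => s1_summand r z.1 z.2) q0 q1
  (fun z => s1_summand_ge0 r z.1 z.2) sp) _.
have [z /lt0r_neq0 qz] := dist_gt0 qd.
rewrite ler_ln ?posrE //; last first.
  by rewrite (bigD1 z) //= ltr_pwDl ?sp // sumr_ge0 // => *; exact: s1_summand_ge0.
by rewrite (pair_sum (s1_summand r)) ler_sum // => y _; exact: sum_s1_summand_le.
Qed.

Definition opt_joint : {ffun X * Y -> R} :=
  [ffun z => s1_summand opt_reverse z.1 z.2 / sib_norm].

Lemma opt_joint_dist : is_dist opt_joint.
Proof.
have S0 := sib_norm_gt0; split=> [z|]; first by rewrite ffunE divr_ge0 ?s1_summand_ge0 ?ltW.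
under eq_bigr do rewrite ffunE.
rewrite -mulr_suml (pair_sum (s1_summand opt_reverse)).
by under eq_bigr do rewrite sum_s1_opt_reverse; rewrite mulfV ?gt_eqF.
Qed.

Lemma F_S3_opt_joint : 1 < al -> F_S3 al pX W opt_joint opt_reverse = sibson_value%:E.
Proof.
move=> al1; have S0 := sib_norm_gt0; have [j0 j1] := opt_joint_dist.
have al_neq1 : al != 1 by rewrite gt_eqF.
have r0 x y : 0 <= opt_reverse y x by case: (opt_reverse_channel y).
have sn z : opt_joint z != 0 -> s1_summand opt_reverse z.1 z.2 != 0.
  by apply: contraNneq; rewrite ffunE => ->; rewrite mul0r.
have supp z : opt_joint z != 0 ->
    [/\ 0 < pX z.1, 0 < W z.1 z.2 & 0 < opt_reverse z.2 z.1].
  move=> /sn; rewrite /s1_summand !mulf_eq0 !negb_or => /andP[/andP[pn wn] rn].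
  rewrite !lt_def wn pX_ge0 W_ge0 r0 !andbT; split=> //.
    by apply: contra pn => /eqP ->; rewrite powR0 ?invr_eq0.
  by apply: contra rn => /eqP ->; rewrite powR0 // gt_eqF // subr_gt0 invf_lt1.
rewrite (F_S3_EFin al_neq1 opt_joint_dist supp) /sibson_value; congr (_ * _)%:E.
rewrite (eq_bigr (fun z => opt_joint z * ln sib_norm)) -?mulr_suml ?j1 ?mul1r // => z _.
case: eqP => [->|/eqP /sn jz]; first by rewrite mul0r.
by rewrite [in ln _]ffunE invf_div mulrCA mulfV ?mulr1.
Qed.

End Sibson.

Unset Implicit Arguments.

Theorem theorem1 (R : realType) (X Y : finType) (alpha : R)
  (pX : {ffun X -> R}) (pYX : {ffun X -> {ffun Y -> R}}) :
  0 < alpha -> alpha != 1 ->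
  is_dist pX -> is_channel pYX ->
  [/\ is_max_of (@is_channel R Y X) (F_S1 alpha pX pYX) (sibson_MI alpha pX pYX),
      is_max_of (@is_channel R Y X) (F_S2 alpha pX pYX) (sibson_MI alpha pX pYX)
    & 1 < alpha ->
      is_max_of (fun u : {ffun X * Y -> R} * {ffun Y -> {ffun X -> R}} =>
                   is_dist u.1 /\ is_channel u.2)
                (fun u => F_S3 alpha pX pYX u.1 u.2)
                (sibson_MI alpha pX pYX)].
Proof.
move=> al_gt0 al_neq1 pX_dist W_chan.
have rc := opt_reverse_channel alpha pYX pX_dist.
rewrite sibson_MI_closed_form //; split.
- split; first by exists (opt_reverse alpha pX pYX); split; last exact: F_S1_opt_reverse.
  by move=> r r_chan; exact: F_S1_le.
- split.
    exists (tilt alpha^-1 (opt_reverse alpha pX pYX)); split; first exact: tilt_channel.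
    by rewrite /F_S2 (tiltK (lt0r_neq0 al_gt0) rc) F_S1_opt_reverse.
  by move=> r r_chan; apply: F_S1_le => //; exact: tilt_channel.
- move=> al_gt1; split.
    exists (opt_joint alpha pX pYX, opt_reverse alpha pX pYX).
    by split; [split=> //; exact: opt_joint_dist | exact: F_S3_opt_joint].
  by move=> [q r] [q_dist r_chan]; exact: F_S3_le.
Qed.
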